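(* Let $R$ be a local ring and $R\subset S$ a ring extension such that $S$ is of finite type as an $R$-algebra. Then $R\subset S$ is Prüfer if and only if there is a strong divisor $s\in\Delta(R)$ such that $S=R_s$ (as $R$-algebras).
   Context: All rings are commutative with identity; ''local'' means having a unique maximal ideal. A strong divisor of a local ring $R$ is a regular element $t\in R$ such that $Rt$ is comparable under inclusion with every ideal of $R$; $\Delta(R)$ is the set of strong divisors. An extension $A\subseteq B$ is Prüfer if $A\subseteq C$ is a flat epimorphism for each intermediate ring $C$. $R_s$ denotes the localization of $R$ at the powers of $s$. *)

From HB Require Import structures.
From mathcomp Require Import all_boot all_order all_algebra.
Set Implicit Arguments. Unset Strict Implicit. Unset Printing Implicit Defensive.
Import GRing.Theory.
Local Open Scope ring_scope.

Definition is_ideal (R : comNzRingType) (I : R -> Prop) : Prop :=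
  [/\ I 0, (forall x y, I x -> I y -> I (x + y)) & (forall r x, I x -> I (r * x))].

Definition is_maximal_ideal (R : comNzRingType) (M : R -> Prop) : Prop :=
  [/\ is_ideal M, ~ M 1 &
      forall J : R -> Prop, is_ideal J -> (forall x, M x -> J x) ->
        J 1 \/ (forall x, J x -> M x)].

Definition is_local (R : comNzRingType) : Prop :=
  exists M : R -> Prop, is_maximal_ideal M /\
    forall M' : R -> Prop, is_maximal_ideal M' -> forall x, M' x <-> M x.

Definition regular (R : comNzRingType) (t : R) : Prop :=
  forall x : R, t * x = 0 -> x = 0.

Definition principal (R : comNzRingType) (t : R) : R -> Prop :=
  fun x => exists r, x = r * t.

Definition strong_divisor (R : comNzRingType) (t : R) : Prop :=
  regular t /\
  forall I : R -> Prop, is_ideal I ->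
    (forall x, principal t x -> I x) \/ (forall x, I x -> principal t x).

Definition is_subring (S : comNzRingType) (C : S -> Prop) : Prop :=
  [/\ C 1, (forall x y, C x -> C y -> C (x - y)) & (forall x y, C x -> C y -> C (x * y))].

Definition finite_type (R S : comNzRingType) (f : {rmorphism R -> S}) : Prop :=
  exists xs : seq S, forall P : S -> Prop,
    is_subring P -> (forall r, P (f r)) -> (forall x, x \in xs -> P x) ->
    forall x, P x.

Definition rmorph_on (S : comNzRingType) (D : comPzRingType) (C : S -> Prop) (g : S -> D) : Prop :=
  [/\ g 1 = 1, (forall x y, C x -> C y -> g (x + y) = g x + g y)
    & (forall x y, C x -> C y -> g (x * y) = g x * g y)].

Definition epi_into (R S : comNzRingType) (f : {rmorphism R -> S}) (C : S -> Prop) : Prop :=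
  forall (D : comPzRingType) (g h : S -> D),
    rmorph_on C g -> rmorph_on C h -> (forall r, g (f r) = h (f r)) ->
    forall x, C x -> g x = h x.

(* C is flat as an R-module via f (equational criterion of flatness) *)
Definition flat_into (R S : comNzRingType) (f : {rmorphism R -> S}) (C : S -> Prop) : Prop :=
  forall (n : nat) (a : 'I_n -> R) (m : 'I_n -> S),
    (forall i, C (m i)) -> \sum_i f (a i) * m i = 0 ->
    exists (k : nat) (b : 'I_n -> 'I_k -> R) (y : 'I_k -> S),
      [/\ forall j, C (y j),
          forall i, m i = \sum_j f (b i j) * y j
        & forall j, \sum_i a i * b i j = 0].

Definition pruefer (R S : comNzRingType) (f : {rmorphism R -> S}) : Prop :=
  forall C : S -> Prop, is_subring C -> (forall r, C (f r)) ->
    flat_into f C /\ epi_into f C.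

(* (S, f) is the localization R_s of R at the powers of s, as an R-algebra
   (standard characterization: f s invertible, every element is f r / f s ^ n,
   and the kernel of f is the s-power torsion). *)
Definition is_localization_at (R S : comNzRingType) (f : {rmorphism R -> S}) (s : R) : Prop :=
  [/\ (exists u : S, f s * u = 1),
      (forall x : S, exists (r : R) (n : nat), x * f s ^+ n = f r)
    & (forall r : R, f r = 0 -> exists n : nat, s ^+ n * r = 0)].

(* Both sides are equivalent to the dichotomy: every element of S lies in R or
   is the inverse of an element of R.  Given a strong divisor s, every r / s^n
   has r in R s^n or s^n in R r; conversely, a common denominator s of finitely
   many generators of S is a strong divisor with S = R_s.  Under the dichotomy
   every intermediate ring is a ring of fractions of R, hence flat and
   epimorphic.  For the converse over a local ring (R, M) take z in S.  As
   R -> R[z] is an epimorphism, z (x) 1 = 1 (x) z in R[z] (x)_R R[z], i.e.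
   z - X lies in the ideal generated by the kernel of R[X] -> R[z]; flatness
   of R[z] turns this relation into e_t in R with e_t z in R and
   1 in sum_t e_t R[z].  If some e_t is a unit then z is in R.  Otherwise
   1 = P(z) with P in M[X], which makes z invertible with an inverse w
   integral over R with coefficients in M; Nakayama forbids 1 in M R[w],
   so the same alternative applied to w puts w in R. *)

From HB Require Import structures.
From mathcomp Require Import all_boot all_order all_algebra.
From mathcomp Require Import boolp classical_sets ring.
Set Implicit Arguments. Unset Strict Implicit. Unset Printing Implicit Defensive.
Import GRing.Theory.
Local Open Scope ring_scope.

Definition image_or_inverse (R S : comNzRingType) (f : {rmorphism R -> S}) : Prop :=
  forall x : S, (exists r, x = f r) \/ (exists a, f a * x = 1).

Section Ideals.
Variable R : comNzRingType.

Lemma principal_ideal (t : R) : is_ideal (principal t).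
Proof.
split; first by exists 0; rewrite mul0r.
- by move=> x y [a ->] [b ->]; exists (a + b); rewrite mulrDl.
- by move=> c x [a ->]; exists (c * a); rewrite mulrA.
Qed.

Lemma nonunit_maximal_ideal (x : R) : ~ (exists y, x * y = 1) ->
  exists M : R -> Prop, is_maximal_ideal M /\ M x.
Proof.
move=> nux.
pose proper_over_x (A : R -> Prop) := [/\ is_ideal A, ~ A 1 & A x].
(* The empty set is admitted so that the union of the empty chain qualifies. *)
pose P A := A = set0 \/ proper_over_x A.
have [|A [PA Amax]] := @Zorn_bigcup R P.
  move=> F FP Ftot.
  have [[A0 [FA0 PA0]]|noA] := pselect (exists A, F A /\ proper_over_x A); last first.
    left; apply/funext => y; apply/propext; split => // -[A FA Ay].
    by case: (FP A FA) => [eA|PA]; [rewrite eA in Ay|apply: noA; exists A].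
  have memF A y : F A -> A y -> proper_over_x A.
    by move=> FA Ay; case: (FP A FA) => // eA; rewrite eA in Ay.
  right; split; last by exists A0 => //; case: PA0.
  - split; first by exists A0 => //; case: PA0 => -[].
    + move=> y y' [A1 FA1 A1y] [A2 FA2 A2y'].
      have [[[_ D1 _] _ _] [[_ D2 _] _ _]] := (memF _ _ FA1 A1y, memF _ _ FA2 A2y').
      case: (Ftot _ _ FA1 FA2) => sub.
        by exists A2 => //; apply: D2 => //; apply: sub.
      by exists A1 => //; apply: D1 => //; apply: sub.
    + move=> r y [A1 FA1 A1y]; have [[_ _ M1] _ _] := memF _ _ FA1 A1y.
      by exists A1 => //; apply: M1.
  - by move=> [A1 FA1 A1y]; have [_ + _] := memF _ _ FA1 A1y.
have Px : P (principal x).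
  right; split; first exact: principal_ideal.
    by move=> [r e]; apply: nux; exists r; rewrite mulrC -e.
  by exists 1; rewrite mul1r.
case: PA => [eA|[iA nA xA]].
  exfalso; apply: (Amax _ _ Px); rewrite eA; split => // /(_ 0).
  by apply; exists 0; rewrite mul0r.
exists A; split => //; split => // J iJ AJ.
have [J1|nJ1] := pselect (J 1); [by left|right].
move=> y Jy; apply: contrapT => nAy.
apply: (Amax J); last by right; split => //; apply: AJ.
by split => // /(_ y Jy).
Qed.

Lemma local_nonunits_ideal : is_local R -> exists M : R -> Prop,
  [/\ is_ideal M, ~ M 1 & forall x, ~ M x -> exists y, x * y = 1].
Proof.
move=> [M [[iM nM _] uniqM]]; exists M; split => // x nMx.
apply: contrapT => nux; have [M' [maxM' M'x]] := nonunit_maximal_ideal nux.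
by apply: nMx; apply/(uniqM M' maxM').
Qed.

Lemma strong_divisor_expr_comparable (s : R) n r : strong_divisor s ->
  (exists b, r = b * s ^+ n) \/ (exists a, s ^+ n = a * r).
Proof.
move=> [_ sd]; elim: n r => [|n IH] r; first by left; exists r; rewrite mulr1.
case: (sd _ (principal_ideal r)) => [/(_ s) []|/(_ r) []].
- by exists 1; rewrite mul1r.
- by move=> a ea; right; exists (s ^+ n * a); rewrite exprSr ea mulrA.
- by exists 1; rewrite mul1r.
move=> c ->; case: (IH c) => [[b ->]|[a ea]].
  by left; exists b; rewrite exprSr mulrA.
by right; exists a; rewrite exprSr ea mulrA.
Qed.

End Ideals.

Section ImageOrInverse.
Variables (R S : comNzRingType) (f : {rmorphism R -> S}).
Hypothesis f_inv : image_or_inverse f.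

Lemma image_or_inverse_fraction (C : S -> Prop) x : C 1 -> C x ->
  exists w d r, [/\ C w, f d * w = 1 & x = f r * w].
Proof.
move=> C1 Cx; case: (f_inv x) => [[r ->]|[d dx]].
  by exists 1, 1, r; rewrite rmorph1 !mulr1.
by exists x, d, 1; rewrite rmorph1 mul1r.
Qed.

Lemma image_or_inverse_common_denominator (C : S -> Prop) (I : finType) (m : I -> S) :
  C 1 -> (forall x y, C x -> C y -> C (x * y)) -> (forall i, C (m i)) ->
  exists w d (r : I -> R), [/\ C w, f d * w = 1 & forall i, m i = f (r i) * w].
Proof.
move=> C1 CM Cm.
have /choice[wdr Hwdr] : forall i, exists wdr : S * R * R,
    [/\ C wdr.1.1, f wdr.1.2 * wdr.1.1 = 1 & m i = f wdr.2 * wdr.1.1].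
  move=> i; have [w [d [r [Cw dw e]]]] := image_or_inverse_fraction C1 (Cm i).
  by exists (w, d, r).
pose w i := (wdr i).1.1; pose d i := (wdr i).1.2.
have dwK i : f (d i) * w i = 1 by case: (Hwdr i).
exists (\prod_i w i), (\prod_i d i), (fun i => (wdr i).2 * \prod_(j | j != i) d j).
split.
- by apply: big_ind => // i _; case: (Hwdr i).
- by rewrite rmorph_prod -big_split big1 // => i _; apply: dwK.
- move=> i; have [_ _ ->] := Hwdr i.
  rewrite rmorphM rmorph_prod [\prod_j w j](bigD1 i) //= -mulrA; congr (_ * _).
  by rewrite mulrCA -big_split big1 ?mulr1 // => j _; apply: dwK.
Qed.

Lemma image_or_inverse_epi (C : S -> Prop) : (forall r, C (f r)) -> epi_into f C.
Proof.
move=> Cf D g h [g1 _ gM] [h1 _ hM] gh x Cx.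
case: (f_inv x) => [[r ->]|[a ax]]; first exact: gh.
have gx : g (f a) * g x = 1 by rewrite -gM ?ax.
have hx : h (f a) * h x = 1 by rewrite -hM ?ax.
by rewrite -[g x]mulr1 -hx -gh mulrA [g x * _]mulrC gx mul1r.
Qed.

Hypothesis f_inj : injective f.

Lemma image_or_inverse_flat (C : S -> Prop) : is_subring C -> flat_into f C.
Proof.
move=> [C1 _ CM] n a m Cm sum0.
have [w [d [r [Cw dw mr]]]] := image_or_inverse_common_denominator C1 CM Cm.
exists 1%N, (fun i _ => r i), (fun _ => w); split => // [i|j].
  by rewrite big_ord1 mr.
apply: f_inj; rewrite rmorph0 -[LHS]mulr1 -dw mulrCA rmorph_sum mulr_suml.
rewrite (eq_bigr (fun i => f (a i) * m i)) ?sum0 ?mulr0 // => i _.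
by rewrite rmorphM mr mulrA.
Qed.

Lemma image_or_inverse_pruefer : pruefer f.
Proof.
move=> C subC Cf; split; [exact: image_or_inverse_flat|exact: image_or_inverse_epi].
Qed.

Lemma image_or_inverse_strong_divisor s : (exists u, f s * u = 1) -> strong_divisor s.
Proof.
move=> [u su]; split.
  move=> x sx; apply: f_inj.
  by rewrite rmorph0 -[f x]mul1r -su mulrAC -rmorphM sx rmorph0 mul0r.
move=> I [_ _ IM].
have [[a [Ia nsa]]|sub] := pselect (exists a, I a /\ ~ principal s a); last first.
  by right=> a Ia; apply: contrapT => nsa; apply: sub; exists a.
case: (f_inv (f a * u)) => [[r er]|[y ey]].
  exfalso; apply: nsa; exists r; apply: f_inj.
  by rewrite rmorphM -er -mulrA [u * _]mulrC su mulr1.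
have -> : s = y * a.
  by apply: f_inj; rewrite rmorphM -[LHS]mul1r -ey -!mulrA [u * _]mulrC su mulr1.
by left=> x [r ->]; rewrite mulrA; apply: IM.
Qed.

End ImageOrInverse.

Section Localization.
Variables (R S : comNzRingType) (f : {rmorphism R -> S}).

Lemma localization_image_or_inverse (s : R) :
  strong_divisor s -> is_localization_at f s -> image_or_inverse f.
Proof.
move=> sds [[u su] frac _] x.
have [r [n xr]] := frac x.
have unK : f s ^+ n * u ^+ n = 1 by rewrite -exprMn su expr1n.
case: (strong_divisor_expr_comparable n r sds) => [[b eb]|[a ea]].
  left; exists b.
  by rewrite -[x]mulr1 -unK mulrA xr eb rmorphM rmorphXn -mulrA unK mulr1.
right; exists a.
have : f a * x * f s ^+ n = f s ^+ n by rewrite -mulrA xr -rmorphM -ea rmorphXn.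
by move/(congr1 (fun y => y * u ^+ n)); rewrite -mulrA unK mulr1.
Qed.

Lemma fractions_subring (s : R) :
  is_subring (fun x => exists r n, x * f s ^+ n = f r).
Proof.
split.
- by exists 1, 0%N; rewrite mulr1 rmorph1.
- move=> x y [r [n xr]] [r' [n' yr']].
  exists (r * s ^+ n' - r' * s ^+ n), (n + n')%N.
  by rewrite rmorphB !rmorphM !rmorphXn -xr -yr' exprD; ring.
- move=> x y [r [n xr]] [r' [n' yr']].
  by exists (r * r'), (n + n')%N; rewrite rmorphM -xr -yr' exprD; ring.
Qed.

Hypothesis f_inj : injective f.

Lemma is_localization_at_of_generators (s : R) (xs : seq S) :
  (forall P : S -> Prop, is_subring P -> (forall r, P (f r)) ->
     (forall x, x \in xs -> P x) -> forall x, P x) ->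
  (exists u, f s * u = 1) -> (forall x, x \in xs -> exists r, x * f s = f r) ->
  is_localization_at f s.
Proof.
move=> gen su xs_frac; split => //.
  apply: gen; first exact: fractions_subring.
    by move=> r; exists r, 0%N; rewrite mulr1.
  by move=> x /xs_frac [r xr]; exists r, 1%N; rewrite expr1.
by move=> r; rewrite -(rmorph0 f) => /f_inj ->; exists 0%N; rewrite mulr0.
Qed.

Hypothesis f_inv : image_or_inverse f.

Lemma image_or_inverse_localization :
  finite_type f -> exists s, strong_divisor s /\ is_localization_at f s.
Proof.
move=> [xs gen].
have [w [d [r [_ dw xsr]]]] := image_or_inverse_common_denominator f_inv
  (C := fun _ => True) (m := fun i : 'I_(size xs) => xs`_i) I (fun _ _ _ _ => I) (fun _ => I).
exists d; split; first by apply: image_or_inverse_strong_divisor => //; exists w.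
apply: is_localization_at_of_generators gen _ _; first by exists w.
move=> x /(nthP 0) [i ilt <-]; exists (r (Ordinal ilt)).
by rewrite (xsr (Ordinal ilt)) -mulrA [w * _]mulrC dw mulr1.
Qed.

End Localization.

Section IdealQuotient.
Local Open Scope quotient_scope.
Variables (A : comNzRingType) (J : A -> Prop).
Hypotheses (J_ideal : is_ideal J) (J_proper : ~ J 1).

Definition ideal_pred : {pred A} := fun x => `[< J x >].

Lemma ideal_pred_closed : idealr_closed ideal_pred.
Proof.
case: J_ideal => J0 JD JM; split; [exact/asboolP|exact/asboolP|].
by move=> a u v /asboolP Ju /asboolP Jv; apply/asboolP; apply: JD => //; apply: JM.
Qed.

HB.instance Definition _ := isIdealr.Build A ideal_pred ideal_pred_closed.

Lemma quotient_ring_exists : exists (D : comNzRingType) (pi : {rmorphism A -> D}),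
  forall x y, pi x = pi y <-> J (x - y).
Proof.
exists {ideal_quot ideal_pred}, \pi => x y; split => [/eqP|Jxy].
  by rewrite -Quotient.idealrBE => /asboolP.
by apply/eqP; rewrite -Quotient.idealrBE; apply/asboolP.
Qed.

End IdealQuotient.

Section Flatness.
Variables (R S : comNzRingType) (f : {rmorphism R -> S}) (C : S -> Prop).
Hypothesis C_flat : flat_into f C.

Lemma flat_into_system (I : finType) (p : nat) (A : nat -> I -> R) (m : I -> S) :
  (forall i, C (m i)) -> (forall k, (k < p)%N -> \sum_i f (A k i) * m i = 0) ->
  exists (K : nat) (B : I -> 'I_K -> R) (y : 'I_K -> S),
    [/\ forall t, C (y t), forall i, m i = \sum_t f (B i t) * y t &
        forall k, (k < p)%N -> forall t, \sum_i A k i * B i t = 0].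
Proof.
move=> Cm; elim: p => [|p IH] eqs.
  exists #|I|, (fun i t => (enum_rank i == t)%:R), (fun t => m (enum_val t)).
  split => // i; rewrite (bigD1 (enum_rank i)) //= eqxx rmorph1 mul1r enum_rankK.
  by rewrite big1 ?addr0 // => t; rewrite eq_sym => /negPf ->; rewrite rmorph0 mul0r.
have [K [B [y [Cy my eB]]]] := IH (fun k kp => eqs k (ltnW kp)).
(* Solve the last equation, rewritten in the coordinates [y], by flatness. *)
pose a t := \sum_i A p i * B i t.
have ay : \sum_t f (a t) * y t = 0.
  rewrite -[RHS](eqs p) //; under [RHS]eq_bigr do rewrite my mulr_sumr.
  rewrite exchange_big /=; apply: eq_bigr => t _.
  by rewrite rmorph_sum mulr_suml; apply: eq_bigr => i _; rewrite rmorphM mulrA.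
have [K' [b [y' [Cy' yb ab]]]] := C_flat Cy ay.
exists K', (fun i t' => \sum_t B i t * b t t'), y'; split => //.
  move=> i; rewrite my; under eq_bigr do rewrite yb mulr_sumr.
  rewrite exchange_big /=; apply: eq_bigr => t' _.
  by rewrite rmorph_sum mulr_suml; apply: eq_bigr => t _; rewrite rmorphM mulrA.
move=> k; rewrite ltnS leq_eqVlt => /orP[/eqP ->|kp] t'.
  rewrite -[RHS](ab t'); under eq_bigr do rewrite mulr_sumr.
  rewrite exchange_big /=; apply: eq_bigr => t _.
  by rewrite /a mulr_suml; apply: eq_bigr => i _; rewrite mulrA.
under eq_bigr do rewrite mulr_sumr.
rewrite exchange_big /= big1 // => t _.
by under eq_bigr do rewrite mulrA; rewrite -mulr_suml eB // mul0r.
Qed.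

Lemma flat_into_poly (I : finType) (P : I -> {poly R}) (m : I -> S) :
  (forall i, C (m i)) -> \sum_i m i *: map_poly f (P i) = 0 ->
  exists (K : nat) (B : I -> 'I_K -> R) (y : 'I_K -> S),
    [/\ forall t, C (y t), forall i, m i = \sum_t f (B i t) * y t &
        forall t, \sum_i B i t *: P i = 0].
Proof.
move=> Cm Pm0; pose p := \max_i size (P i).
have sizeP i : (size (P i) <= p)%N by apply: leq_bigmax.
have [|K [B [y [Cy my eB]]]] := @flat_into_system I p (fun k i => (P i)`_k) m Cm.
  move=> k _; rewrite -[RHS](coef0 _ k) -Pm0 coef_sum; apply: eq_bigr => i _.
  by rewrite coefZ coef_map mulrC.
exists K, B, y; split => // t; apply/polyP => k; rewrite coef0 coef_sum.
have [kp|pk] := ltnP k p.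
  by rewrite -[RHS](eB k kp t); apply: eq_bigr => i _; rewrite coefZ mulrC.
by rewrite big1 // => i _; rewrite coefZ nth_default ?mulr0 // (leq_trans (sizeP i)).
Qed.

End Flatness.

Section Adjoin.
Variables (R S : comNzRingType) (f : {rmorphism R -> S}) (z : S).

Definition evz : {rmorphism {poly R} -> S} := horner_morph (fun a => mulrC z (f a)).

Lemma evzE p : evz p = (map_poly f p).[z]. Proof. by []. Qed.
Lemma evzC c : evz c%:P = f c. Proof. by rewrite evzE map_polyC hornerC. Qed.
Lemma evzX : evz 'X = z. Proof. by rewrite evzE map_polyX hornerX. Qed.
Lemma evzZ c p : evz (c *: p) = f c * evz p.
Proof. by rewrite -mul_polyC rmorphM evzC. Qed.

Definition Rz (x : S) : Prop := exists p, x = evz p.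

Lemma Rz1 : Rz 1. Proof. by exists 1; rewrite rmorph1. Qed.
Lemma Rz_f r : Rz (f r). Proof. by exists r%:P; rewrite evzC. Qed.
Lemma Rz_z : Rz z. Proof. by exists 'X; rewrite evzX. Qed.
Lemma RzM x y : Rz x -> Rz y -> Rz (x * y).
Proof. by move=> [p ->] [q ->]; exists (p * q); rewrite rmorphM. Qed.

Lemma Rz_subring : is_subring Rz.
Proof.
split; [exact: Rz1| |exact: RzM].
by move=> x y [p ->] [q ->]; exists (p - q); rewrite rmorphB.
Qed.

(* The ideal of [R[z][X]] generated by the kernel of [evz], inside [S[X]]. *)
Definition ker_span (Q : {poly S}) : Prop := exists s : seq (S * {poly R}),
  (forall x, x \in s -> Rz x.1 /\ evz x.2 = 0) /\
  Q = \sum_(x <- s) x.1 *: map_poly f x.2.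

Lemma ker_span0 : ker_span 0. Proof. by exists [::]; rewrite big_nil. Qed.

Lemma ker_spanD P Q : ker_span P -> ker_span Q -> ker_span (P + Q).
Proof.
move=> [s [s_ker ->]] [s' [s'_ker ->]]; exists (s ++ s'); rewrite big_cat.
by split => // x; rewrite mem_cat => /orP[/s_ker|/s'_ker].
Qed.

Lemma ker_span_gen c q : Rz c -> evz q = 0 -> ker_span (c *: map_poly f q).
Proof.
move=> Rc qz; exists [:: (c, q)]; rewrite big_seq1.
by split => // x; rewrite inE => /eqP ->.
Qed.

Lemma ker_span_sum (I : finType) (F : I -> {poly S}) :
  (forall i, ker_span (F i)) -> ker_span (\sum_i F i).
Proof. by move=> kerF; apply: big_ind => //; [exact: ker_span0|exact: ker_spanD]. Qed.

Lemma ker_spanM (T Q : {poly S}) : (forall i, Rz T`_i) -> ker_span Q -> ker_span (T * Q).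
Proof.
move=> RT [s [s_ker ->]]; rewrite mulr_sumr big_seq.
apply: big_ind => [|P P'|[c q] /s_ker [Rc qz]]; [exact: ker_span0|exact: ker_spanD|].
rewrite -[T]coefK poly_def mulr_suml; apply: ker_span_sum => i.
have -> : T`_i *: 'X^i * (c *: map_poly f q) = (T`_i * c) *: map_poly f ('X^i * q).
  by rewrite rmorphM /= map_polyXn -!mul_polyC polyCM; ring.
by apply: ker_span_gen; [exact: RzM|rewrite rmorphM qz mulr0].
Qed.

(* [tensor_ideal] presents [R[z] ⊗_R R[z]] as a quotient of [R[Y][X]]: the
   inner variable [Y] stands for [z ⊗ 1] and the outer one [X] for [1 ⊗ z]. *)
Definition evz_coef : {rmorphism {poly {poly R}} -> {poly S}} := map_poly evz.
Lemma evz_coefC c : evz_coef c%:P = (evz c)%:P. Proof. exact: map_polyC. Qed.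
Lemma evz_coefX : evz_coef 'X = 'X. Proof. exact: map_polyX. Qed.
Lemma evz_coef_map p : evz_coef (map_poly polyC p) = map_poly f p.
Proof. by rewrite /= -map_poly_comp; apply: eq_map_poly; exact: evzC. Qed.

Definition tensor_ideal (P : {poly {poly R}}) : Prop := ker_span (evz_coef P).

Lemma tensor_idealP : is_ideal tensor_ideal.
Proof.
rewrite /tensor_ideal; split; first by rewrite rmorph0; exact: ker_span0.
  by move=> P Q ? ?; rewrite rmorphD; exact: ker_spanD.
move=> P Q ?; rewrite rmorphM; apply: ker_spanM => // i.
by rewrite coef_map; exists P`_i.
Qed.

Lemma tensor_ideal_evz p q : evz p = evz q ->
  tensor_ideal (p%:P - q%:P) /\ tensor_ideal (map_poly polyC p - map_poly polyC q).
Proof.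
move=> epq; have pq0 : evz (p - q) = 0 by rewrite rmorphB epq subrr.
rewrite /tensor_ideal -polyCB -!rmorphB evz_coefC evz_coef_map pq0 polyC0.
split; first exact: ker_span0.
by rewrite -[map_poly f _]scale1r; apply: ker_span_gen => //; exact: Rz1.
Qed.

Lemma evz_factor (D : comPzRingType) (phi : {rmorphism {poly R} -> D}) :
  (forall p q, evz p = evz q -> phi p = phi q) ->
  exists g : S -> D, rmorph_on Rz g /\ forall p, g (evz p) = phi p.
Proof.
move=> phiE.
have /choice[pick pickK] : forall x, exists p, Rz x -> evz p = x.
  move=> x; have [[p ->]|nRx] := pselect (Rz x); first by exists p.
  by exists 0 => /nRx.
have gE p : phi (pick (evz p)) = phi p by apply: phiE; rewrite pickK //; exists p.
exists (phi \o pick); split => //=; split => /=.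
- by rewrite -(rmorph1 evz) gE rmorph1.
- by move=> _ _ [p ->] [q ->]; rewrite -rmorphD !gE rmorphD.
- by move=> _ _ [p ->] [q ->]; rewrite -rmorphM !gE rmorphM.
Qed.

Lemma epi_into_ker_span : epi_into f Rz -> ker_span (z%:P - 'X).
Proof.
move=> epi; suff : tensor_ideal ('X%:P - 'X).
  by rewrite /tensor_ideal rmorphB evz_coefC evz_coefX evzX.
have [J1|J_proper] := pselect (tensor_ideal 1).
  by case: tensor_idealP => _ _ /(_ ('X%:P - 'X) 1 J1); rewrite mulr1.
have [D [pi piE]] := quotient_ring_exists tensor_idealP J_proper.
have [g [g_rmorph gE]] := @evz_factor D (pi \o polyC) (fun p q pq =>
  proj2 (piE _ _) (proj1 (tensor_ideal_evz pq))).
have [h [h_rmorph hE]] := @evz_factor D (pi \o map_poly polyC) (fun p q pq =>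
  proj2 (piE _ _) (proj2 (tensor_ideal_evz pq))).
have gh r : g (f r) = h (f r) by rewrite -evzC gE hE /= map_polyC.
have := epi D g h g_rmorph h_rmorph gh z Rz_z.
by rewrite -evzX gE hE /= map_polyX => /piE.
Qed.

Lemma flat_ker_span_denominators : flat_into f Rz -> ker_span (z%:P - 'X) ->
  exists K (e g : 'I_K -> R) (y : 'I_K -> S),
    [/\ forall t, Rz (y t), forall t, f (e t) * z = f (g t) & 1 = \sum_t f (e t) * y t].
Proof.
move=> flat [s [s_ker zX]].
pose c (l : 'I_(size s)) := (nth (0, 0) s l).1.
pose q (l : 'I_(size s)) := (nth (0, 0) s l).2.
have cq_ker l : Rz (c l) /\ evz (q l) = 0 by apply/s_ker/mem_nth.
(* The identity [z - X = sum_l c_l q_l(X)], read as a relation between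
   [c_l], [1] and [z] with coefficients in [R[X]]. *)
pose m (i : 'I_(size s) + bool) :=
  match i with inl l => c l | inr b => if b then 1 else z end.
pose P (i : 'I_(size s) + bool) : {poly R} :=
  match i with inl l => q l | inr b => if b then 'X else -1 end.
have Rm i : Rz (m i) by case: i => [l|[]]; [case: (cq_ker l)|exact: Rz1|exact: Rz_z].
have [|K [B [y [Ry my PB]]]] := flat_into_poly flat (P := P) Rm.
  rewrite (big_nth (0, 0)) big_mkord in zX.
  rewrite big_sumType big_bool /= -zX map_polyX rmorphN rmorph1 scale1r scalerN.
  by rewrite -alg_polyC addrA subrK subrr.
exists K, (fun t => B (inr true) t), (fun t => B (inr false) t), y; split => // [t|].
  have := congr1 evz (PB t); rewrite rmorph_sum big_sumType big_bool /= big1.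
    rewrite rmorph0 add0r !evzZ evzX rmorphN rmorph1 mulrN1.
    by move/eqP; rewrite subr_eq0 => /eqP.
  by move=> l _; rewrite evzZ; case: (cq_ker l) => _ ->; rewrite mulr0.
by rewrite -[LHS]/(m (inr true)) my.
Qed.

End Adjoin.

Section PolyMap.
Variables (R S : comNzRingType) (f : {rmorphism R -> S}).

Lemma horner_map_coef (P : {poly R}) (w : S) :
  (map_poly f P).[w] = \sum_(i < size P) f P`_i * w ^+ i.
Proof.
rewrite (@horner_coef_wide _ (size P)) ?size_poly //.
by apply: eq_bigr => i _; rewrite coef_map.
Qed.

Lemma inverse_poly_integral (Q : {poly R}) (z w : S) :
  w = (map_poly f Q).[z] -> w * z = 1 ->
  exists k, w ^+ k.+1 = \sum_(j < k.+1) f Q`_(k - j) * w ^+ j.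
Proof.
move=> wQ wz; case sQ: (size Q) => [|k].
  by move/eqP: wz; rewrite wQ horner_map_coef sQ big_ord0 mul0r eq_sym oner_eq0.
exists k; rewrite (reindex_inj rev_ord_inj) /=.
have -> : w ^+ k.+1 = \sum_(i < k.+1) f Q`_i * (w ^+ k * z ^+ i).
  by rewrite exprSr {2}wQ horner_map_coef sQ mulr_sumr; apply: eq_bigr => i _; ring.
apply: eq_bigr => i _; rewrite subSS subKn -1?ltnS //; congr (_ * _).
have -> : w ^+ k = w ^+ (k - i) * w ^+ i by rewrite -exprD subnK // -ltnS.
by rewrite -mulrA -exprMn wz expr1n mulr1.
Qed.

End PolyMap.

Section MaximalIdeal.
Variables (R S : comNzRingType) (f : {rmorphism R -> S}) (M : R -> Prop).
Hypotheses (M_ideal : is_ideal M) (M_proper : ~ M 1).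
Hypothesis M_units : forall x, ~ M x -> exists y, x * y = 1.

Let M0 : M 0. Proof. by case: M_ideal. Qed.
Let MD x y : M x -> M y -> M (x + y). Proof. by case: M_ideal => _ + _; apply. Qed.
Let MMl r x : M x -> M (r * x). Proof. by case: M_ideal => _ _; apply. Qed.
Let MMr r x : M x -> M (x * r). Proof. by rewrite mulrC; apply: MMl. Qed.

Lemma one_sub_unit m : M m -> exists v, (1 - m) * v = 1.
Proof.
move=> Mm; apply: M_units => M1m; apply: M_proper.
by rewrite -(subrK m 1); apply: MD.
Qed.

Definition Mspan (e : nat -> S) n (x : S) : Prop :=
  exists c : nat -> R, (forall j, M (c j)) /\ x = \sum_(j < n) f (c j) * e j.

Lemma Mspan0 e n : Mspan e n 0.
Proof.
exists (fun _ => 0); split => [j|]; first exact: M0.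
by rewrite big1 // => j _; rewrite rmorph0 mul0r.
Qed.

Lemma MspanD e n x y : Mspan e n x -> Mspan e n y -> Mspan e n (x + y).
Proof.
move=> [c [Mc ->]] [c' [Mc' ->]]; exists (fun j => c j + c' j); split => [j|].
  exact: MD.
by rewrite -big_split; apply: eq_bigr => j _; rewrite rmorphD mulrDl.
Qed.

Lemma MspanZ e n r x : Mspan e n x -> Mspan e n (f r * x).
Proof.
move=> [c [Mc ->]]; exists (fun j => r * c j); split => [j|]; first exact: MMl.
by rewrite mulr_sumr; apply: eq_bigr => j _; rewrite rmorphM mulrA.
Qed.

Lemma Mspan_sum e n (I : finType) (F : I -> S) :
  (forall i, Mspan e n (F i)) -> Mspan e n (\sum_i F i).
Proof. by move=> spanF; apply: big_ind => //; [exact: Mspan0|exact: MspanD]. Qed.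

Lemma nakayama_span (e : nat -> S) n :
  (forall c : nat -> R, Mspan e n (\sum_(j < n) f (c j) * e j)) ->
  forall c : nat -> R, \sum_(j < n) f (c j) * e j = 0.
Proof.
elim: n => [|n IH] span c; first by rewrite big_ord0.
have splitn (c' : nat -> R) :
    \sum_(j < n.+1) f (c' j) * e j = \sum_(j < n) f (c' j) * e j + f (c' n) * e n.
  by rewrite big_ord_recr.
(* From [e n = c'_n e n + ...] with [1 - c'_n] a unit, [e n] lies in the
   span of the others, and induction applies to [e 0, ..., e (n-1)]. *)
have [c' [Mc' ec']] := span (fun j => (j == n)%:R).
have [v ev] := one_sub_unit (Mc' n).
have en : e n = \sum_(j < n) f (v * c' j) * e j.
  move: ec'; rewrite (splitn (fun j => (j == n)%:R)) splitn /= eqxx rmorph1 mul1r.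
  rewrite big1 ?add0r => [ec'|j _]; last by rewrite (ltn_eqF (ltn_ord j)) rmorph0 mul0r.
  have en' : f (1 - c' n) * e n = \sum_(j < n) f (c' j) * e j.
    by rewrite rmorphB rmorph1 mulrBl mul1r {1}ec' addrK.
  rewrite -[e n]mul1r -(rmorph1 f) -ev rmorphM mulrAC en' mulr_suml.
  by apply: eq_bigr => j _; rewrite rmorphM; ring.
have {}IH : forall c : nat -> R, \sum_(j < n) f (c j) * e j = 0.
  apply: IH => c2.
  have [c'' [Mc'' e'']] := span (fun j => if (j < n)%N then c2 j else 0).
  exists (fun j => c'' j + c'' n * (v * c' j)); split => [j|].
    by apply: MD => //; apply: MMr.
  move: e''; rewrite (splitn (fun j => if (j < n)%N then c2 j else 0)) splitn /=.
  rewrite ltnn rmorph0 mul0r addr0.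
  rewrite (eq_bigr (fun j : 'I_n => f (c2 j) * e j)) => [->|j _]; last by rewrite ltn_ord.
  rewrite en mulr_sumr -big_split; apply: eq_bigr => j _.
  by rewrite rmorphD rmorphM mulrDl mulrA.
by rewrite splitn IH add0r en (IH (fun j => v * c' j)) mulr0.
Qed.

Section IntegralElement.
Variables (w : S) (k : nat) (d : nat -> R).
Hypothesis Md : forall j, M (d j).
Hypothesis w_integral : w ^+ k.+1 = \sum_(j < k.+1) f (d j) * w ^+ j.

Let span := Mspan (GRing.exp w) k.+1.

Let span_f m : M m -> span (f m).
Proof.
move=> Mm; exists (fun j => if j == 0%N then m else 0); split => [[|j]//|].
rewrite big_ord_recl expr0 mulr1 big1 ?addr0 // => j _.
by rewrite rmorph0 mul0r.
Qed.

(* Multiplication by [w] shifts the coordinates; the overflow [w ^+ k.+1] is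
   folded back by the integral equation, whose coefficients lie in [M]. *)
Let span_mulX x : span x -> span (x * w).
Proof.
move=> [c [Mc ->]].
exists (fun j => (if j is j'.+1 then c j' else 0) + c k * d j); split.
  by move=> [|j]; apply: MD => //; apply: MMl.
rewrite big_ord_recr /= mulrDl mulr_suml -mulrA -exprSr w_integral.
under [in RHS]eq_bigr do rewrite rmorphD mulrDl.
rewrite big_split /= [X in _ = X + _]big_ord_recl /= rmorph0 mul0r add0r mulr_sumr.
congr (_ + _); first by apply: eq_bigr => j _; rewrite exprSr mulrA.
by apply: eq_bigr => j _; rewrite rmorphM mulrA.
Qed.

Let span_mulXn x i : span x -> span (x * w ^+ i).
Proof.
elim: i => [|i IH] x_span; first by rewrite mulr1.
by rewrite exprSr mulrA; apply/span_mulX/IH.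
Qed.

Lemma integral_poly_over_ideal_neq1 (P : {poly R}) :
  (forall i, M P`_i) -> (map_poly f P).[w] <> 1.
Proof.
move=> MP Pw1.
have span1 : span 1.
  by rewrite -Pw1 horner_map_coef; apply: Mspan_sum => i; apply/span_mulXn/span_f.
suff all_span : forall c : nat -> R, span (\sum_(j < k.+1) f (c j) * w ^+ j).
  have := nakayama_span all_span (fun j => (j == 0%N)%:R).
  rewrite big_ord_recl rmorph1 mul1r expr0 big1 ?addr0 => [/eqP|j _].
    by rewrite oner_eq0.
  by rewrite rmorph0 mul0r.
move=> c; apply: Mspan_sum => j; apply: MspanZ.
by rewrite -[_ ^+ _]mul1r; apply: span_mulXn.
Qed.

End IntegralElement.

Lemma poly_over_ideal_eq1_inverse (P : {poly R}) (z : S) :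
  (forall i, M P`_i) -> (map_poly f P).[z] = 1 ->
  exists Q : {poly R}, (forall i, M Q`_i) /\ (map_poly f Q).[z] * z = 1.
Proof.
move=> MP Pz1; have [v ev] := one_sub_unit (MP 0%N).
exists (v *: drop_poly 1 P); split => [i|].
  by rewrite coefZ coef_drop_poly; apply: MMl.
have P_split : P = drop_poly 1 P * 'X + (P`_0)%:P.
  rewrite -[LHS](poly_take_drop 1) addrC; congr (_ + _).
  by apply/polyP => i; rewrite coef_take_poly coefC; case: i.
move: Pz1; rewrite {1}P_split rmorphD rmorphM /= map_polyX map_polyC hornerMXaddC.
move/(canRL (addrK _)); rewrite map_polyZ hornerZ -mulrA => ->.
by rewrite -(rmorph1 f) -rmorphB -rmorphM mulrC ev.
Qed.

Lemma image_or_inverse_of_poly_eq1 :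
  (forall z : S, (exists r, z = f r) \/
     exists P : {poly R}, (forall i, M P`_i) /\ (map_poly f P).[z] = 1) ->
  image_or_inverse f.
Proof.
move=> image_or_eq1 z; case: (image_or_eq1 z) => [|[P [MP Pz1]]]; first by left.
right; have [Q [MQ wz]] := poly_over_ideal_eq1_inverse MP Pz1.
have [k w_integral] := inverse_poly_integral (erefl _) wz.
case: (image_or_eq1 (map_poly f Q).[z]) => [[r wr]|[P' [MP' P'w1]]].
  by exists r; rewrite -wr.
by case: (integral_poly_over_ideal_neq1 (fun j => MQ (k - j)%N) w_integral MP' P'w1).
Qed.

Lemma denominators_image_or_poly_eq1 (z : S) K (e g : 'I_K -> R) (y : 'I_K -> S) :
  (forall t, Rz f z (y t)) -> (forall t, f (e t) * z = f (g t)) ->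
  1 = \sum_t f (e t) * y t ->
  (exists r, z = f r) \/ exists P : {poly R}, (forall i, M P`_i) /\ (map_poly f P).[z] = 1.
Proof.
move=> Ry eg ey.
have [[t nMe]|allM] := pselect (exists t, ~ M (e t)).
  have [v ev] := M_units nMe; left; exists (v * g t).
  by rewrite rmorphM -eg mulrA -rmorphM [v * _]mulrC ev rmorph1 mul1r.
have /choice[p yp] := Ry.
right; exists (\sum_t e t *: p t); split.
  move=> i; rewrite coef_sum; apply: big_ind => [|a b|t _]; [exact: M0|exact: MD|].
  by rewrite coefZ; apply: MMr; apply: contrapT => nMe; apply: allM; exists t.
by rewrite -evzE rmorph_sum ey; apply: eq_bigr => t _; rewrite evzZ yp.
Qed.

End MaximalIdeal.

Lemma pruefer_image_or_inverse (R S : comNzRingType) (f : {rmorphism R -> S}) :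
  is_local R -> pruefer f -> image_or_inverse f.
Proof.
move=> /local_nonunits_ideal [M [M_ideal M_proper M_units]] pr.
apply: (image_or_inverse_of_poly_eq1 M_ideal M_proper M_units) => z.
have [flat epi] := pr _ (Rz_subring f z) (@Rz_f _ _ f z).
have [K [e [g [y [Ry eg ey]]]]] := flat_ker_span_denominators flat (epi_into_ker_span epi).
exact: denominators_image_or_poly_eq1 Ry eg ey.
Qed.

Theorem mainTheorem6 (R S : comNzRingType) (f : {rmorphism R -> S}) :
  is_local R -> injective f -> finite_type f ->
  (pruefer f <-> exists s : R, strong_divisor s /\ is_localization_at f s).
Proof.
move=> R_local f_inj f_fin; split=> [pr|[s [sds loc]]].
  by apply: image_or_inverse_localization => //; apply: pruefer_image_or_inverse.
by apply: image_or_inverse_pruefer => //; apply: localization_image_or_inverse sds loc.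
Qed.
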